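(* Consider a Bayesian persuasion setting with binary state space $\Theta=\{\theta_1,\theta_2\}$, binary action space $A=\{a_1,a_2\}$, a finite signal space $\Sigma$ with $|\Sigma|\ge 2$, common prior with $p=\Pr_\mu[\theta=\theta_1]$, sender utility $u_S:\Theta\times A\to\mathbb{R}$ and receiver utility $u_R:\Theta\times A\to\mathbb{R}$. Assume the receiver is state-matching: $u_R(\theta_1,a_1)\ge u_R(\theta_1,a_2)$ and $u_R(\theta_2,a_2)\ge u_R(\theta_2,a_1)$; and the sender is action-matching: $u_S(\theta_1,a_1)\ge u_S(\theta_2,a_1)$ and $u_S(\theta_2,a_2)\ge u_S(\theta_1,a_2)$. Let $(\ell,h)$ and $(\ell',h')$ be two feasible constraints, i.e. $\ell\le p\le h$ and $\ell'\le p\le h'$, such that $(\ell,h)$ is more binding than $(\ell',h')$, i.e. $\ell'\le \ell$ and $h\le h'$. Let $\Phi$ and $\Phi'$ be the sets of sender-optimal signaling schemes under the constraints $(\ell,h)$ and $(\ell',h')$ respectively. Let $\varphi\in\Phi$ maximize the receiver's expected utility $\mathbb{E}_{\theta\sim\mu,\sigma\sim\varphi(\theta),a\sim\pi_\varphi(\sigma)}[u_R(\theta,a)]$ over $\Phi$, and let $\varphi'\in\Phi'$ maximize the receiver's expected utility $\mathbb{E}_{\theta\sim\mu,\sigma\sim\varphi'(\theta),a\sim\pi_{\varphi'}(\sigma)}[u_R(\theta,a)]$ over $\Phi'$. Then $$\mathbb{E}_{\theta\sim\mu,\sigma\sim\varphi(\theta),a\sim\pi_\varphi(\sigma)}[u_R(\theta,a)]\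 \ge\ \mathbb{E}_{\theta\sim\mu,\sigma\sim\varphi'(\theta),a\sim\pi_{\varphi'}(\sigma)}[u_R(\theta,a)].$$
   Context: The sender commits to a signaling scheme $\varphi:\Theta\to\Delta(\Sigma)$ before observing the state $\theta\sim\mu$, then sends $\sigma\sim\varphi(\theta)$. The receiver observes $\sigma$ and chooses an action via a (possibly randomized) strategy $\pi:\Sigma\to\Delta(A)$. A constraint $(\ell,h)$ with $0\le\ell\le h\le 1$ requires that the overall probability (over the randomness of the state, the sender's signal and the receiver's randomization) that the receiver plays $a_1$ lies in $[\ell,h]$, i.e. $\ell\le \Pr_{\mu,\varphi,\pi}[\pi(\varphi(\theta))=a_1]\le h$. Under a constraint, the receiver's best response $\pi_\varphi$ to $\varphi$ is a strategy satisfying the constraint that maximizes her expected utility $\mathbb{E}[u_R(\theta,a)]$ among all strategies satisfying the constraint, with ties broken in favor of the sender. A signaling scheme is sender-optimal under a constraint if it maximizes the sender's expected utility $\mathbb{E}_{\theta\sim\mu,\sigma\sim\varphi(\theta),a\sim\pi_\varphi(\sigma)}[u_S(\theta,a)]$ given that the receiver plays her constrained best response. *)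

From mathcomp Require Import all_boot all_order all_algebra.
From mathcomp Require Import reals.
Set Implicit Arguments. Unset Strict Implicit. Unset Printing Implicit Defensive.
Import Order.TTheory GRing.Theory Num.Theory.
Local Open Scope ring_scope.

(* Conventions: states Theta = bool with  true = theta_1, false = theta_2;
   actions A = bool with true = a_1, false = a_2.
   Prior: mu(theta_1) = p, mu(theta_2) = 1 - p.
   A signaling scheme phi : bool -> Sigma -> R, phi th s = Pr[sigma = s | theta = th].
   A receiver (mixed) strategy pi : Sigma -> R, pi s = Pr[a = a_1 | sigma = s]
   (so a_2 is played with probability 1 - pi s). *)

Section Persuasion.
Variables (R : realType) (Sigma : finType).

Definition prior (p : R) (th : bool) : R := if th then p else 1 - p.

Definition is_scheme (phi : bool -> Sigma -> R) : Prop :=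
  forall th, (forall s, 0 <= phi th s) /\ \sum_(s : Sigma) phi th s = 1.

Definition is_strategy (pi : Sigma -> R) : Prop :=
  forall s, 0 <= pi s <= 1.

Definition prob_a1 (p : R) (phi : bool -> Sigma -> R) (pi : Sigma -> R) : R :=
  \sum_(th : bool) prior p th * \sum_(s : Sigma) phi th s * pi s.

Definition exp_util (u : bool -> bool -> R) (p : R)
    (phi : bool -> Sigma -> R) (pi : Sigma -> R) : R :=
  \sum_(th : bool) prior p th *
    \sum_(s : Sigma) phi th s * (pi s * u th true + (1 - pi s) * u th false).

Definition satisfies (p l h : R) (phi : bool -> Sigma -> R) (pi : Sigma -> R) : Prop :=
  is_strategy pi /\ l <= prob_a1 p phi pi <= h.

Definition receiver_opt (uR : bool -> bool -> R) (p l h : R)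
    (phi : bool -> Sigma -> R) (pi : Sigma -> R) : Prop :=
  satisfies p l h phi pi /\
  forall pi', satisfies p l h phi pi' -> exp_util uR p phi pi' <= exp_util uR p phi pi.

Definition best_response (uS uR : bool -> bool -> R) (p l h : R)
    (phi : bool -> Sigma -> R) (pi : Sigma -> R) : Prop :=
  receiver_opt uR p l h phi pi /\
  forall pi', receiver_opt uR p l h phi pi' -> exp_util uS p phi pi' <= exp_util uS p phi pi.

Definition sender_optimal (uS uR : bool -> bool -> R) (p l h : R)
    (phi : bool -> Sigma -> R) : Prop :=
  is_scheme phi /\
  exists pi, best_response uS uR p l h phi pi /\
  forall phi' pi', is_scheme phi' -> best_response uS uR p l h phi' pi' ->
    exp_util uS p phi' pi' <= exp_util uS p phi pi.

Definition receiver_best_sender_optimal (uS uR : bool -> bool -> R) (p l h : R)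
    (phi : bool -> Sigma -> R) (pi : Sigma -> R) : Prop :=
  sender_optimal uS uR p l h phi /\ best_response uS uR p l h phi pi /\
  forall psi rho, sender_optimal uS uR p l h psi ->
    best_response uS uR p l h psi rho ->
    exp_util uR p psi rho <= exp_util uR p phi pi.

End Persuasion.

From mathcomp Require Import all_boot all_order all_algebra.
From mathcomp Require Import reals.
From mathcomp Require Import ring lra.
Set Implicit Arguments. Unset Strict Implicit. Unset Printing Implicit Defensive.
Import Order.TTheory GRing.Theory Num.Theory.
Local Open Scope ring_scope.

(* Everything the players care about depends on a scheme and a strategy only
   through the joint probabilities x(th) = Pr[theta = th, a = a_1], and
   affinely.  In each regime of the sender's preferences (a_1 in both states,
   a_2 in both states, or the matching action) an explicit two-signal scheme
   with an obedient recommendation is sender-optimal under (l, h): it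
   recommends the sender's preferred action in one state and pools as much of
   the other state into it as the constraint and the receiver's obedience
   allow.  Receiver optimality forces every sender-optimal outcome to give the
   receiver at most the payoff of this target, the receiver-best
   sender-optimal scheme gives her at least as much, and relaxing (l, h) to
   (l', h') only lets the sender pool more, which lowers the target's payoff
   for the receiver. *)

Lemma bounded_ratio (R : realFieldType) (x c : R) :
  0 <= x <= c -> c * (x / c) = x /\ 0 <= x / c <= 1.
Proof.
case/andP=> x_ge0 x_le_c; have [c0|c_neq0] := eqVneq c 0.
  have -> : x = 0 by apply/le_anti; rewrite x_ge0 -c0 x_le_c.
  by rewrite c0 !mul0r lexx ler01.
have c_gt0 : 0 < c by rewrite lt_def c_neq0 (le_trans x_ge0 x_le_c).
split; first by rewrite mulrC divfK.
by rewrite divr_ge0 ?(ltW c_gt0) // ler_pdivrMr // mul1r.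
Qed.

Lemma sum_two_support (R : nmodType) (I : finType) (F : I -> R) i j : i != j ->
  (forall k, k != i -> k != j -> F k = 0) -> \sum_k F k = F i + F j.
Proof.
move=> neq_ij F0; rewrite (bigD1 i) //= (bigD1 j) /=; last by rewrite eq_sym neq_ij.
by rewrite big1 ?addr0 // => k /andP[]; apply: F0.
Qed.

Section Outcome.
Variables (R : realType) (Sigma : finType) (p : R).
Hypothesis p01 : 0 <= p <= 1.
Implicit Types (phi psi : bool -> Sigma -> R) (pi rho : Sigma -> R).
Implicit Types (u : bool -> bool -> R) (x : bool -> R).

(* pr p phi pi th = Pr[theta = th, a = a_1]; expected utilities depend on
   (phi, pi) only through it (exp_utilE), payoff u giving the utility in excess
   of always playing a_2. *)
Definition pr phi pi th : R := prior p th * \sum_s phi th s * pi s.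

Definition gain u th : R := u th true - u th false.

Definition payoff u x : R := gain u true * x true + gain u false * x false.

Lemma prior_ge0 th : 0 <= prior p th.
Proof. by case/andP: p01; case: th => /= *; rewrite ?subr_ge0. Qed.

Lemma prob_a1E phi pi : prob_a1 p phi pi = pr phi pi true + pr phi pi false.
Proof. by rewrite /prob_a1 big_bool. Qed.

Lemma scheme_sum_affine phi th a b pi : is_scheme phi ->
  \sum_s phi th s * (a + b * pi s) = a + b * \sum_s phi th s * pi s.
Proof.
move=> /(_ th)[_ sum1].
under eq_bigr do rewrite mulrDr mulrCA.
by rewrite big_split /= -mulr_suml -mulr_sumr sum1 mul1r.
Qed.

Lemma pr_affine phi th a b pi : is_scheme phi ->
  pr phi (fun s => a + b * pi s) th = prior p th * a + b * pr phi pi th.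
Proof. by move=> Hphi; rewrite /pr scheme_sum_affine //; ring. Qed.

Lemma pr_bounds phi pi : is_scheme phi -> is_strategy pi ->
  [/\ 0 <= pr phi pi true <= p & 0 <= pr phi pi false <= 1 - p].
Proof.
move=> Hphi Hpi; suff pr_le th : 0 <= pr phi pi th <= prior p th.
  by split; [exact: pr_le true | exact: pr_le false].
have [phi_ge0 sum1] := Hphi th; have := prior_ge0 th.
have m_ge0 : 0 <= \sum_s phi th s * pi s.
  by apply: sumr_ge0 => s _; rewrite mulr_ge0 //; case/andP: (Hpi s).
have m_le1 : \sum_s phi th s * pi s <= 1.
  by rewrite -sum1; apply: ler_sum => s _; rewrite ler_piMr //; case/andP: (Hpi s).
rewrite /pr; nra.
Qed.

Lemma exp_utilE u phi pi : is_scheme phi ->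
  exp_util u p phi pi = \sum_th prior p th * u th false + payoff u (pr phi pi).
Proof.
move=> Hphi; rewrite /exp_util /payoff !big_bool /pr.
have E th : \sum_s phi th s * (pi s * u th true + (1 - pi s) * u th false)
    = u th false + gain u th * \sum_s phi th s * pi s.
  rewrite -scheme_sum_affine //; apply: eq_bigr => s _; rewrite /gain; ring.
by rewrite !E /=; ring.
Qed.

Lemma ler_exp_util u phi pi psi rho : is_scheme phi -> is_scheme psi ->
  (exp_util u p phi pi <= exp_util u p psi rho) =
  (payoff u (pr phi pi) <= payoff u (pr psi rho)).
Proof. by move=> Hphi Hpsi; rewrite !exp_utilE // lerD2l. Qed.

End Outcome.

Section ReceiverOptimality.
Variables (R : realType) (Sigma : finType) (p : R) (uR : bool -> bool -> R) (l h : R).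
Variables (phi : bool -> Sigma -> R) (pi : Sigma -> R).
Hypotheses (Hphi : is_scheme phi) (Hopt : receiver_opt uR p l h phi pi).

(* payoff uR (prior p) is the payoff of always playing a_1, and the mixture of
   pi with the constant strategy t is a deviation open to the receiver. *)
Lemma receiver_opt_mix c t : 0 <= c < 1 -> 0 <= t -> t <= 1 ->
    l <= c * prob_a1 p phi pi + (1 - c) * t <= h ->
  t * payoff uR (prior p) <= payoff uR (pr p phi pi).
Proof.
case: Hopt => [[Hpi _] opt] /andP[c_ge0 c_lt1] t_ge0 t_le1 Hc.
pose pi' s := (1 - c) * t + c * pi s.
have pr' th : pr p phi pi' th = prior p th * ((1 - c) * t) + c * pr p phi pi th.
  exact: pr_affine.
have sat' : satisfies p l h phi pi'.
  split=> [s|].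
    by have /andP[pi_ge0 pi_le1] := Hpi s; rewrite /pi'; apply/andP; split; nra.
  have -> : prob_a1 p phi pi' = c * prob_a1 p phi pi + (1 - c) * t.
    by rewrite !prob_a1E !pr' /=; ring.
  exact: Hc.
have : (1 - c) * (t * payoff uR (prior p) - payoff uR (pr p phi pi)) <= 0.
  have := opt _ sat'; rewrite ler_exp_util // /payoff !pr' /=; nra.
by rewrite pmulr_rle0 ?subr_gt0 // subr_le0.
Qed.

Lemma receiver_opt_low : 0 <= l -> payoff uR (pr p phi pi) < 0 -> prob_a1 p phi pi <= l.
Proof.
move=> l_ge0 payoff_lt0; rewrite leNgt; apply/negP => l_lt.
have [[_ /andP[lP Ph]] _] := Hopt.
have P_gt0 : 0 < prob_a1 p phi pi := le_lt_trans l_ge0 l_lt.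
pose c := l / prob_a1 p phi pi.
have cP : c * prob_a1 p phi pi = l by rewrite divfK ?gt_eqF.
have c01 : 0 <= c < 1.
  apply/andP; split; first exact: divr_ge0 l_ge0 (ltW P_gt0).
  by rewrite /c ltr_pdivrMr // mul1r.
have mix : l <= c * prob_a1 p phi pi + (1 - c) * 0 <= h.
  by rewrite mulr0 addr0 cP lexx (le_trans lP Ph).
by have := receiver_opt_mix c01 (lexx 0) ler01 mix; rewrite mul0r leNgt payoff_lt0.
Qed.

Lemma receiver_opt_high : h <= 1 ->
  payoff uR (pr p phi pi) < payoff uR (prior p) -> h <= prob_a1 p phi pi.
Proof.
move=> h_le1 payoff_lt; rewrite leNgt; apply/negP => lt_h.
have [[_ /andP[lP Ph]] _] := Hopt.
have P_lt1 : 0 < 1 - prob_a1 p phi pi by rewrite subr_gt0 (lt_le_trans lt_h).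
pose c := (1 - h) / (1 - prob_a1 p phi pi).
have cP : c * (1 - prob_a1 p phi pi) = 1 - h by rewrite divfK ?gt_eqF.
have c01 : 0 <= c < 1.
  apply/andP; split; first by apply: divr_ge0; lra.
  by rewrite /c ltr_pdivrMr // mul1r; lra.
have mixE : c * prob_a1 p phi pi + (1 - c) * 1 = h by lra.
have mix : l <= c * prob_a1 p phi pi + (1 - c) * 1 <= h.
  by rewrite mixE lexx (le_trans lP Ph).
by have := receiver_opt_mix c01 ler01 (lexx 1) mix; rewrite mul1r leNgt payoff_lt.
Qed.

End ReceiverOptimality.

(* x th / prior p th is the junk value 0 when prior p th = 0, harmless since
   then x th = 0 as well. *)
Lemma two_signal_scheme (R : realType) (Sigma : finType) (p : R) (x : bool -> R)
    (s1 s2 : Sigma) : s1 != s2 -> (forall th, 0 <= x th <= prior p th) ->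
  exists2 psi, is_scheme psi & forall pi th,
    pr p psi pi th = x th * pi s1 + (prior p th - x th) * pi s2.
Proof.
move=> neq x_bnd.
pose psi th s := if s == s1 then x th / prior p th
                 else if s == s2 then 1 - x th / prior p th else 0.
have sum_psi (F : Sigma -> R) th :
    \sum_s psi th s * F s = psi th s1 * F s1 + psi th s2 * F s2.
  by apply: sum_two_support => // s; rewrite /psi => /negbTE-> /negbTE->; rewrite mul0r.
have psi1 th : psi th s1 = x th / prior p th by rewrite /psi eqxx.
have psi2 th : psi th s2 = 1 - x th / prior p th.
  by rewrite /psi eq_sym (negbTE neq) eqxx.
exists psi => [th | pi th]; have [E /andP[q_ge0 q_le1]] := bounded_ratio (x_bnd th).
- split=> [s|]; first by rewrite /psi; case: ifP => _; [|case: ifP => _]; lra.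
  by rewrite -(eq_bigr _ (fun s _ => mulr1 (psi th s))) sum_psi psi1 psi2; ring.
- by rewrite /pr sum_psi psi1 psi2 -[in RHS]E; ring.
Qed.

Section OptimalTarget.
Variables (R : realType) (Sigma : finType) (uS uR : bool -> bool -> R) (p : R).
Implicit Types (phi psi : bool -> Sigma -> R) (pi rho : Sigma -> R) (x : bool -> R).

(* The middle conditions say that the receiver obeys the recommendation of a
   scheme inducing x: a_1 when told a_1, a_2 when told a_2. *)
Definition optimal_target l h x : Prop :=
  [/\ forall th, 0 <= x th <= prior p th,
      l <= x true + x false <= h,
      0 <= payoff uR x,
      payoff uR (fun th => prior p th - x th) <= 0 &
      forall phi pi, is_scheme phi -> receiver_opt uR p l h phi pi ->
        payoff uS (pr p phi pi) <= payoff uS x].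

Lemma optimal_target_realized l h x : (1 < #|Sigma|)%N -> optimal_target l h x ->
  exists psi rho, [/\ sender_optimal uS uR p l h psi,
    best_response uS uR p l h psi rho & forall u, payoff u (pr p psi rho) = payoff u x].
Proof.
case/card_gt1P=> s1 [s2 [_ _ neq]] [x_bnd Hc obey1 obey2 bound].
have [psi Hpsi prE] := two_signal_scheme neq x_bnd.
pose rho s : R := (s == s1)%:R.
have Hrho : is_strategy rho.
  by move=> s; rewrite /rho; case: (s == s1); rewrite /= lexx ler01.
have rhoE th : pr p psi rho th = x th.
  by rewrite prE /rho eqxx eq_sym (negbTE neq) mulr1 mulr0 addr0.
have payoffE u : payoff u (pr p psi rho) = payoff u x by rewrite /payoff !rhoE.
have Hopt : receiver_opt uR p l h psi rho.
  split=> [|pi [Hpi _]]; first by split; rewrite // prob_a1E !rhoE.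
  rewrite ler_exp_util // payoffE.
  have -> : payoff uR (pr p psi pi) =
      pi s1 * payoff uR x + pi s2 * payoff uR (fun th => prior p th - x th).
    by rewrite /payoff !prE; ring.
  have /andP[pi1_ge0 pi1_le1] := Hpi s1; have /andP[pi2_ge0 pi2_le1] := Hpi s2.
  nra.
have Hbr : best_response uS uR p l h psi rho.
  by split=> // pi Hopt'; rewrite ler_exp_util // payoffE; exact: bound.
exists psi, rho; split=> //; split=> //; exists rho; split=> // phi pi Hphi [Hopt' _].
by rewrite ler_exp_util // payoffE; exact: bound.
Qed.

Lemma sender_optimal_best_response l h phi pi psi rho :
  sender_optimal uS uR p l h phi -> best_response uS uR p l h phi pi ->
  is_scheme psi -> best_response uS uR p l h psi rho ->
  exp_util uS p psi rho <= exp_util uS p phi pi.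
Proof.
move=> [_ [pi0 [[Hopt0 _] max0]]] [_ tie] Hpsi Hbr.
exact: le_trans (max0 _ _ Hpsi Hbr) (tie _ Hopt0).
Qed.

Lemma optimal_target_le_sender l h x phi pi : (1 < #|Sigma|)%N ->
  optimal_target l h x -> sender_optimal uS uR p l h phi ->
  best_response uS uR p l h phi pi -> payoff uS x <= payoff uS (pr p phi pi).
Proof.
move=> Sigma2 Hx Hso Hbr.
have [psi [rho [[Hpsi _] Hbr_psi E]]] := optimal_target_realized Sigma2 Hx.
rewrite -E -ler_exp_util //; last by case: Hso.
exact: sender_optimal_best_response Hso Hbr Hpsi Hbr_psi.
Qed.

Lemma optimal_target_le_receiver l h x phi pi : (1 < #|Sigma|)%N ->
  optimal_target l h x -> receiver_best_sender_optimal uS uR p l h phi pi ->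
  payoff uR x <= payoff uR (pr p phi pi).
Proof.
move=> Sigma2 Hx [[Hphi _] [_ best]].
have [psi [rho [Hso Hbr E]]] := optimal_target_realized Sigma2 Hx.
by rewrite -E -ler_exp_util //; [exact: best | case: Hso].
Qed.

End OptimalTarget.

Section Cap.
Variable R : realFieldType.
Implicit Types a b c : R.

Definition cap a b c : R := if b * c <= a then c else a / b.

Lemma capP a b c : 0 <= a -> 0 <= b -> 0 <= c ->
  [/\ 0 <= cap a b c <= c, b * cap a b c <= a
    & cap a b c = c \/ 0 < b /\ b * cap a b c = a].
Proof.
rewrite /cap => a_ge0 b_ge0 c_ge0; case: ifPn => [bc_le|].
  by split; [rewrite c_ge0 lexx | | left].
rewrite -ltNge => a_lt; have b_gt0 : 0 < b.
  by rewrite lt_def b_ge0 andbT; apply: contraTneq a_lt => ->; rewrite mul0r -leNgt.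
have E : b * (a / b) = a by rewrite mulrC divfK ?gt_eqF.
split; [|by rewrite E | by right].
by rewrite divr_ge0 ?(ltW b_gt0) //= ler_pdivrMr // mulrC ltW.
Qed.

Lemma ler_cap a b c c' : 0 <= a -> 0 <= b -> 0 <= c -> c <= c' ->
  b * cap a b c <= b * cap a b c'.
Proof.
move=> a_ge0 b_ge0 c_ge0 cc'; have [/andP[_ y_le] y_bnd _] := capP a_ge0 b_ge0 c_ge0.
have [_ _ [->|[_ ->]]] := capP a_ge0 b_ge0 (le_trans c_ge0 cc') => //.
by rewrite ler_wpM2l // (le_trans y_le).
Qed.

End Cap.

Section Targets.
Variables (R : realType) (Sigma : finType) (uS uR : bool -> bool -> R) (p : R).
Implicit Types (phi : bool -> Sigma -> R) (pi : Sigma -> R).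

Definition feasible (l h : R) : Prop := [/\ 0 <= l, l <= p, p <= h & h <= 1].

Definition state_matching (u : bool -> bool -> R) : Prop :=
  0 <= gain u true /\ gain u false <= 0.

(* The sender-optimal outcome in each regime of the sender's preferences.  If
   he prefers a_1 in both states, theta_1 always gets a_1 and theta_2 is pooled
   with it until the bound h or the receiver's obedience binds; symmetrically
   if he prefers a_2 in both states; otherwise the state is revealed. *)
Definition pool_high h : bool -> R :=
  fun th => if th then p else cap (gain uR true * p) (- gain uR false) (h - p).

Definition pool_low l : bool -> R :=
  fun th => if th then p - cap (- gain uR false * (1 - p)) (gain uR true) (p - l)
            else 0.

Definition reveal : bool -> R := fun th => if th then p else 0.

Definition target l h : bool -> R :=
  if 0 < gain uS false then pool_high h
  else if gain uS true < 0 then pool_low l else reveal.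

Lemma optimal_target_pool_high l h : feasible l h -> state_matching uR ->
  0 <= gain uS false <= gain uS true -> optimal_target Sigma uS uR p l h (pool_high h).
Proof.
case=> l_ge0 lp ph h_le1 [gRt gRf] /andP[gSf gS].
have a_ge0 : 0 <= gain uR true * p by rewrite mulr_ge0 ?(le_trans l_ge0 lp).
have b_ge0 : 0 <= - gain uR false by lra.
have c_ge0 : 0 <= h - p by lra.
have [/andP[y_ge0 y_le] obey y_cases] := capP a_ge0 b_ge0 c_ge0.
rewrite /optimal_target /pool_high /payoff /=; split; try nra.
  by case=> /=; apply/andP; split; lra.
move=> phi pi Hphi Hopt; have [[Hpi /andP[lP Ph]] _] := Hopt.
rewrite prob_a1E in lP Ph.
have p01 : 0 <= p <= 1 by apply/andP; split; lra.
have [/andP[x_ge0 x_le] /andP[y'_ge0 y'_le]] := pr_bounds p01 Hphi Hpi.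
have [payoff_lt0|] := ltP (payoff uR (pr p phi pi)) 0.
  have := receiver_opt_low Hphi Hopt l_ge0 payoff_lt0; rewrite prob_a1E => low.
  rewrite /payoff; nra.
rewrite /payoff; case: y_cases => [->|[b_gt0 by_eq]] obedient; first nra.
set y := cap _ _ _ in y_ge0 y_le obey by_eq *.
suff : pr p phi pi false <= y by nra.
by rewrite -(ler_pM2l b_gt0); nra.
Qed.

Lemma optimal_target_pool_low l h : feasible l h -> state_matching uR ->
  gain uS false <= gain uS true < 0 -> optimal_target Sigma uS uR p l h (pool_low l).
Proof.
case=> l_ge0 lp ph h_le1 [gRt gRf] /andP[gS gSt].
have a_ge0 : 0 <= - gain uR false * (1 - p) by rewrite mulr_ge0 ?subr_ge0; lra.
have c_ge0 : 0 <= p - l by lra.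
have [/andP[z_ge0 z_le] obey z_cases] := capP a_ge0 gRt c_ge0.
rewrite /optimal_target /pool_low /payoff /=; split; try nra.
  by case=> /=; apply/andP; split; lra.
move=> phi pi Hphi Hopt; have [[Hpi /andP[lP Ph]] _] := Hopt.
rewrite prob_a1E in lP Ph.
have p01 : 0 <= p <= 1 by apply/andP; split; lra.
have [/andP[x_ge0 x_le] /andP[y_ge0 y_le]] := pr_bounds p01 Hphi Hpi.
have [payoff_lt|] := ltP (payoff uR (pr p phi pi)) (payoff uR (prior p)).
  have := receiver_opt_high Hphi Hopt h_le1 payoff_lt; rewrite prob_a1E => high.
  rewrite /payoff; nra.
rewrite /payoff /=; case: z_cases => [->|[a_gt0 az_eq]] obedient; first nra.
set z := cap _ _ _ in z_ge0 z_le obey az_eq *.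
suff : p - z <= pr p phi pi true by nra.
by rewrite -(ler_pM2l a_gt0); nra.
Qed.

Lemma optimal_target_reveal l h : feasible l h -> state_matching uR ->
  gain uS false <= 0 <= gain uS true -> optimal_target Sigma uS uR p l h reveal.
Proof.
case=> l_ge0 lp ph h_le1 [gRt gRf] /andP[gSf gSt].
rewrite /optimal_target /reveal /payoff /=; split; try nra.
  by case=> /=; apply/andP; split; lra.
move=> phi pi Hphi [[Hpi _] _].
have p01 : 0 <= p <= 1 by apply/andP; split; lra.
have [/andP[x_ge0 x_le] /andP[y_ge0 y_le]] := pr_bounds p01 Hphi Hpi.
nra.
Qed.

Lemma optimal_target_target l h : feasible l h -> state_matching uR ->
  gain uS false <= gain uS true -> optimal_target Sigma uS uR p l h (target l h).
Proof.
move=> Hlh HR gS; rewrite /target.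
case: ltP => gSf; first by apply: optimal_target_pool_high => //; rewrite ltW.
case: ltP => gSt; first by apply: optimal_target_pool_low => //; rewrite gS.
by apply: optimal_target_reveal => //; rewrite gSf gSt.
Qed.

Lemma receiver_payoff_sender_optimal_le l h phi pi : (1 < #|Sigma|)%N ->
  feasible l h -> state_matching uR -> gain uS false <= gain uS true ->
  sender_optimal uS uR p l h phi -> best_response uS uR p l h phi pi ->
  payoff uR (pr p phi pi) <= payoff uR (target l h).
Proof.
move=> Sigma2 Hlh HR gS Hso Hbr.
have := optimal_target_le_sender Sigma2 (optimal_target_target Hlh HR gS) Hso Hbr.
case: Hso Hbr Hlh HR => Hphi _ [[[Hpi _] _] _] [l_ge0 lp ph h_le1] [gRt gRf].
have p01 : 0 <= p <= 1 by apply/andP; split; lra.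
have [/andP[x_ge0 x_le] /andP[y_ge0 y_le]] := pr_bounds p01 Hphi Hpi.
rewrite /target /payoff.
case: ltP => gSf; [|case: ltP => gSt]; rewrite /= => sender_ge; last nra.
  set y := cap _ _ _ in sender_ge *.
  suff : y <= pr p phi pi false by nra.
  by rewrite -(ler_pM2l gSf); nra.
set z := cap _ _ _ in sender_ge *.
suff : pr p phi pi true <= p - z by nra.
by rewrite -(ler_nM2l gSt); nra.
Qed.

Lemma receiver_payoff_best_ge l h phi pi : (1 < #|Sigma|)%N ->
  feasible l h -> state_matching uR -> gain uS false <= gain uS true ->
  receiver_best_sender_optimal uS uR p l h phi pi ->
  payoff uR (target l h) <= payoff uR (pr p phi pi).
Proof.
move=> Sigma2 Hlh HR gS.
exact: optimal_target_le_receiver Sigma2 (optimal_target_target Hlh HR gS).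
Qed.

Lemma target_payoff_antitone l h l' h' : feasible l h -> feasible l' h' ->
  l' <= l -> h <= h' -> state_matching uR ->
  payoff uR (target l' h') <= payoff uR (target l h).
Proof.
case=> l_ge0 lp ph h_le1 [_ _ ph' _] ll hh [gRt gRf]; rewrite /target /payoff.
have p_ge0 : 0 <= p := le_trans l_ge0 lp.
have p_le1 : p <= 1 := le_trans ph h_le1.
case: ltP => _; [|case: ltP => _]; rewrite /= ?lexx //.
  have b_ge0 : 0 <= - gain uR false by rewrite oppr_ge0.
  have c_ge0 : 0 <= h - p by rewrite subr_ge0.
  have := ler_cap (mulr_ge0 gRt p_ge0) b_ge0 c_ge0 (_ : h - p <= h' - p).
  by rewrite lerD2r => /(_ hh); nra.
have a_ge0 : 0 <= - gain uR false * (1 - p) by rewrite mulr_ge0 ?oppr_ge0 ?subr_ge0.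
have c_ge0 : 0 <= p - l by rewrite subr_ge0.
have := ler_cap a_ge0 gRt c_ge0 (_ : p - l <= p - l').
by rewrite lerD2l lerN2 => /(_ ll); nra.
Qed.

End Targets.

Unset Implicit Arguments.

Theorem theorem2 (R : realType) (Sigma : finType)
    (p : R) (uS uR : bool -> bool -> R) (l h l' h' : R)
    (phi phi' : bool -> Sigma -> R) (pi pi' : Sigma -> R) :
  (2 <= #|Sigma|)%N ->
  0 <= p <= 1 ->
  uR true false <= uR true true ->
  uR false true <= uR false false ->
  uS false true <= uS true true ->
  uS true false <= uS false false ->
  0 <= l <= h -> h <= 1 -> 0 <= l' <= h' -> h' <= 1 ->
  l <= p <= h -> l' <= p <= h' ->
  l' <= l -> h <= h' ->
  receiver_best_sender_optimal uS uR p l h phi pi ->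
  receiver_best_sender_optimal uS uR p l' h' phi' pi' ->
  exp_util uR p phi' pi' <= exp_util uR p phi pi.
Proof.
move=> Sigma2 _ uRt uRf uSt uSf /andP[l_ge0 _] h_le1 /andP[l'_ge0 _] h'_le1.
move=> /andP[lp ph] /andP[lp' ph'] ll hh Hbest [Hso' [Hbr' _]].
have Hlh : feasible p l h by [].
have Hlh' : feasible p l' h' by [].
have HR : state_matching uR by split; rewrite /gain ?subr_ge0 ?subr_le0.
have HS : gain uS false <= gain uS true by rewrite /gain; lra.
rewrite ler_exp_util; [| by case: Hso' | by case: Hbest => [[]]].
apply: (le_trans (receiver_payoff_sender_optimal_le Sigma2 Hlh' HR HS Hso' Hbr')).
apply: (le_trans (target_payoff_antitone uS Hlh Hlh' ll hh HR)).
exact: receiver_payoff_best_ge Sigma2 Hlh HR HS Hbest.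
Qed.
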